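(* Let $k,r\in\mathbb N$ with $r\ge2$, and let $H_1,\dots,H_r$ be graphs, $\mathbf H=(H_i)_{i\in[r]}$. Then $\mathcal B(\mathbf H)\subset\mathcal B'(\mathbf H)$.
   Context: Constants: $\delta=r^{-50}$, $p=\frac1{2^{25}k^2r^4}$. Hypergraphs are identified with their edge sets; $\mathcal G[S]=\{E\in\mathcal G:E\subset S\}$. For $\nu:\mathcal G\to\mathbb R_{\ge0}$: $e(\nu)=\sum_E\nu(E)$, $d_\nu(L)=\sum_{E\in\mathcal G,L\subset E}\nu(E)$, $\Lambda_p(\nu)=\sum_{L\subset V(\mathcal G),|L|\ge2}d_\nu(L)^2p^{-|L|}$. For $R>0$, $\mathcal G$ is $(p,R)$-Janson if some $\nu:\mathcal G\to\mathbb R_{\ge0}$ has $\Lambda_p(\nu)<e(\nu)^2/R$. For graphs $F,G$ and $G'\subset G$, $\mathfrak I_{F,G',G}$ is the hypergraph on $V(G)$ whose edges are the sets $L\subset V(G)$ with $G'[L]=G[L]\cong F$. For a colouring $c$ of edges with colours in $[r]$, $G_i$ is the subgraph of edges of colour $i$. $\mathcal B(\mathbf H)$ is the family of graphs $G$ for which some colouring $c:E(G)\to[r]$ makes $\mathfrak I_{H_i,G_i,G}$ not $(p,p\,v(G))$-Janson for every $i\in[r]$. $\mathcal B'(\mathbf H)$ is the family of graphs $G$ for which there exist $S\subset V(G)$ with $|S|\ge\delta^{2/3}v(G)$ and a colouring $c:E(G[S])\to[r]$ such that $\mathfrak I_{H_i,G_i,G}[S]$ is not $(p,2^{-9}r^{-1}\delta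 p\,v(G))$-Janson for every $i\in[r]$. *)

From HB Require Import structures.
From mathcomp Require Import all_boot all_order all_algebra.
From mathcomp Require Import reals exp.
Set Implicit Arguments. Unset Strict Implicit. Unset Printing Implicit Defensive.
Import Order.TTheory GRing.Theory Num.Theory.
Local Open Scope ring_scope.

Record sgraph := SGraph {
  sV : finType;
  sadj : rel sV;
  sadj_sym : symmetric sadj;
  sadj_irr : irreflexive sadj }.
Arguments sadj : clear implicits.

Definition vnum (G : sgraph) : nat := #|sV G|.

Definition hypergraph (V : finType) := {set V} -> Prop.

Definition hrestr (V : finType) (Gh : hypergraph V) (S : {set V}) : hypergraph V :=
  fun E => Gh E /\ E \subset S.

Section Janson.
Variables (R : realType) (V : finType).

(* weights nu : G -> R_{>=0}, represented as functions on {set V}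
   vanishing outside the edge set *)
Definition hweight (Gh : hypergraph V) (nu : {set V} -> R) : Prop :=
  (forall E, 0 <= nu E) /\ (forall E, ~ Gh E -> nu E = 0).

Definition e_nu (nu : {set V} -> R) : R := \sum_(E : {set V}) nu E.

Definition d_nu (nu : {set V} -> R) (L : {set V}) : R :=
  \sum_(E : {set V} | L \subset E) nu E.

Definition Lambda (p : R) (nu : {set V} -> R) : R :=
  \sum_(L : {set V} | (2 <= #|L|)%N) (d_nu nu L) ^+ 2 * p ^- #|L|.

Definition janson (p Rj : R) (Gh : hypergraph V) : Prop :=
  exists nu : {set V} -> R,
    hweight Gh nu /\ Lambda p nu < (e_nu nu) ^+ 2 / Rj.
End Janson.

Definition induced_iso (F : sgraph) (V : finType) (adj : rel V) (L : {set V}) :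
  Prop :=
  exists f : sV F -> V,
    injective f /\ f @: [set: sV F] = L /\
    (forall u v, sadj F u v = adj (f u) (f v)).

Definition Ihyp (F : sgraph) (V : finType) (adj' adj : rel V) : hypergraph V :=
  fun L =>
    (forall x y, x \in L -> y \in L -> adj' x y = adj x y) /\
    induced_iso F adj L.

Definition delta (R : realType) (r : nat) : R := (r%:R ^+ 50)^-1.
Definition pconst (R : realType) (k r : nat) : R :=
  (2 ^+ 25 * k%:R ^+ 2 * r%:R ^+ 4)^-1.

(* Colourings c : E(G) -> [r] are represented by functions on {set V},
   applied to the 2-set {x,y} of an edge xy (values elsewhere irrelevant).
   G_i = subgraph of edges of colour i. *)
Definition colour_sub (V : finType) (r : nat) (adj : rel V)
  (c : {set V} -> 'I_r) (i : 'I_r) : rel V :=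
  fun x y => adj x y && (c [set x; y] == i).

Definition inB (R : realType) (k r : nat) (H : 'I_r -> sgraph) (G : sgraph) :
  Prop :=
  exists c : {set sV G} -> 'I_r,
    forall i : 'I_r,
      ~ janson (pconst R k r) (pconst R k r * (vnum G)%:R)
          (Ihyp (H i) (colour_sub (sadj G) c i) (sadj G)).

Definition inB' (R : realType) (k r : nat) (H : 'I_r -> sgraph) (G : sgraph) :
  Prop :=
  exists (S : {set sV G}) (c : {set sV G} -> 'I_r),
    powR (delta R r) (2 / 3) * (vnum G)%:R <= (#|S|)%:R /\
    forall i : 'I_r,
      ~ janson (pconst R k r)
          ((2 ^+ 9)^-1 * (r%:R)^-1 * delta R r * pconst R k r * (vnum G)%:R)
          (hrestr (Ihyp (H i)
                     (colour_sub (fun x y => [&& x \in S, y \in S & sadj G x y]) c i)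
                     (sadj G)) S).

Arguments inB : clear implicits.
Arguments inB' : clear implicits.

From mathcomp Require Import all_boot all_order all_algebra.
From mathcomp Require Import reals exp boolp classical_sets topology normedtype derive.
From mathcomp Require Import zify.
From mathcomp.algebra_tactics Require Import ring lra.
Import Order.TTheory GRing.Theory Num.Theory.
Import numFieldNormedType.Exports.
Set Implicit Arguments. Unset Strict Implicit. Unset Printing Implicit Defensive.
Local Open Scope ring_scope.

(* If no weighting of a hypergraph is (p, R)-Janson, minimising the convex
   quadratic [Lambda p nu - 2 e_nu nu] over a box yields a dual certificate:
   a weighting w with [Lambda p w <= 4 R] such that
   [\sum_(L <= E, |L| >= 2) d_w(L) p^-|L| >= 1] on every edge E.  By
   Cauchy-Schwarz, w also certifies [e(nu)^2 <= Lambda p nu * Lambda_S(w)] for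
   every weighting nu supported on a set S, where Lambda_S only counts the sets
   L inside S.  Averaging over all s-subsets S with s ~ delta^(2/3) n makes
   Lambda_S(w_i) of all r colours small simultaneously: the total
   [\sum_i Lambda p w_i <= 4 r p n] shrinks by s (s - 1) / (n (n - 1)) <=
   4 delta^(4/3), which is below 2^-11 r^-2 delta. *)

Lemma continuous_sum (R : realType) (T : topologicalType) (I : Type)
    (s : seq I) (P : pred I) (f : I -> T -> R) :
  (forall i, continuous (f i)) ->
  continuous (fun x => \sum_(i <- s | P i) f i x).
Proof.
move=> fc; elim: s => [|i s IH].
  under eq_fun do rewrite big_nil; exact: cst_continuous.
under eq_fun do rewrite big_cons.
by case: (P i) => // x; exact: (continuousD (fc i x) (IH x)).
Qed.

Lemma continuous_mul (R : realType) (T : topologicalType) (f g : T -> R) :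
  continuous f -> continuous g -> continuous (fun x => f x * g x).
Proof. by move=> f_cont g_cont x; exact: (continuousM (f_cont x) (g_cont x)). Qed.

Section LambdaCalculus.
Variables (R : realType) (V : finType) (p : R).
Implicit Types (w nu : {set V} -> R) (E L S : {set V}).

(* Half the partial derivative of [Lambda p] at [w] in the coordinate [E]. *)
Definition dLambda w E : R :=
  \sum_(L : {set V} | (2 <= #|L|)%N && (L \subset E)) d_nu w L * p ^- #|L|.

(* Only the sets [L] inside [S] are counted, but their degrees are taken in all of [w]. *)
Definition Lambda_in w S : R :=
  \sum_(L : {set V} | (2 <= #|L|)%N && (L \subset S)) d_nu w L ^+ 2 * p ^- #|L|.

Lemma Lambda0 : Lambda p (fun _ : {set V} => 0 : R) = 0.
Proof.
by rewrite /Lambda big1 // => L _; rewrite /d_nu big1 // expr0n mul0r.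
Qed.

Lemma e_nu0 : e_nu (fun _ : {set V} => 0 : R) = 0.
Proof. by rewrite /e_nu big1. Qed.

Lemma d_nu_indicator E L : d_nu (fun F => (F == E)%:R : R) L = (L \subset E)%:R.
Proof.
rewrite /d_nu big_mkcond (bigD1 E) //= eqxx big1 ?addr0; first by case: (L \subset E).
by move=> F /negbTE FE; case: (L \subset F); rewrite ?FE.
Qed.

Lemma d_nu_add_indicator w E t L :
  d_nu (fun F => w F + t * (F == E)%:R) L = d_nu w L + t * (L \subset E)%:R.
Proof.
by rewrite /d_nu big_split /= -mulr_sumr -[X in t * X]/(d_nu _ L) d_nu_indicator.
Qed.

Lemma e_nu_add_indicator w E t :
  e_nu (fun F => w F + t * (F == E)%:R) = e_nu w + t.
Proof.
rewrite /e_nu big_split /= -mulr_sumr; congr (_ + _).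
rewrite (bigD1 E) //= eqxx big1 ?addr0 ?mulr1 //.
by move=> F /negbTE ->.
Qed.

Lemma Lambda_add_indicator w E t :
  Lambda p (fun F => w F + t * (F == E)%:R) =
  Lambda p w + 2 * t * dLambda w E + t ^+ 2 * Lambda p (fun F => (F == E)%:R).
Proof.
rewrite /Lambda /dLambda big_mkcondr /= 2!mulr_sumr -2!big_split /=.
apply: eq_bigr => L _; rewrite d_nu_add_indicator d_nu_indicator.
by case: (L \subset E); rewrite /= ?mulr1n ?mulr0n; ring.
Qed.

Hypothesis p_ge0 : 0 <= p.

Lemma Lambda_ge0 nu : 0 <= Lambda p nu.
Proof. by apply: sumr_ge0 => L _; rewrite mulr_ge0 ?sqr_ge0 ?invr_ge0 ?exprn_ge0. Qed.

Lemma Lambda_in_ge0 nu S : 0 <= Lambda_in nu S.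
Proof. by apply: sumr_ge0 => L _; rewrite mulr_ge0 ?sqr_ge0 ?invr_ge0 ?exprn_ge0. Qed.

Lemma Lambda_in_le_Lambda nu S : Lambda_in nu S <= Lambda p nu.
Proof.
rewrite /Lambda_in /Lambda [leLHS]big_mkcondr /=; apply: ler_sum => L _.
by case: ifP => _ //; rewrite mulr_ge0 ?sqr_ge0 ?invr_ge0 ?exprn_ge0.
Qed.

End LambdaCalculus.

Lemma weighted_CauchySchwarz (R : realType) (I : finType) (P : pred I)
    (c x y : I -> R) :
  (forall i, 0 <= c i) ->
  (\sum_(i | P i) x i * y i * c i) ^+ 2 <=
  (\sum_(i | P i) x i ^+ 2 * c i) * (\sum_(i | P i) y i ^+ 2 * c i).
Proof.
move=> c_ge0.
set A := \sum_(i | P i) x i ^+ 2 * c i.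
set B := \sum_(i | P i) y i ^+ 2 * c i.
set C := \sum_(i | P i) x i * y i * c i.
have sqr_c_ge0 (z : I -> R) i : 0 <= z i ^+ 2 * c i by rewrite mulr_ge0 ?sqr_ge0.
have [B0|B_neq0] := eqVneq B 0.
  suff -> : C = 0 by rewrite B0 expr0n mulr0.
  rewrite /C big1 // => i Pi.
  have /eqP := psumr_eq0P (fun i _ => sqr_c_ge0 y i) B0 Pi.
  by rewrite mulf_eq0 sqrf_eq0 => /orP[] /eqP ->; rewrite ?mulr0 ?mul0r.
have B_gt0 : 0 < B by rewrite lt_def B_neq0 sumr_ge0.
have : 0 <= B * (A * B - C ^+ 2).
  have -> : B * (A * B - C ^+ 2) = \sum_(i | P i) (B * x i - C * y i) ^+ 2 * c i.
    transitivity (\sum_(i | P i) (B ^+ 2 * (x i ^+ 2 * c i)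
      - 2 * B * C * (x i * y i * c i) + C ^+ 2 * (y i ^+ 2 * c i))).
      by rewrite !big_split /= sumrN -!mulr_sumr -/A -/B -/C; ring.
    by apply: eq_bigr => i _; ring.
  by apply: sumr_ge0 => i _; rewrite mulr_ge0 ?sqr_ge0.
by rewrite pmulr_rge0 // subr_ge0.
Qed.

Section Certificate.
Variables (R : realType) (V : finType) (p : R).
Hypothesis p_ge0 : 0 <= p.
Implicit Types (w nu : {set V} -> R) (E L S : {set V}).

Lemma sum_mul_dLambda w nu S :
  (forall E, nu E != 0 -> E \subset S) ->
  \sum_E nu E * dLambda p w E =
  \sum_(L : {set V} | (2 <= #|L|)%N && (L \subset S))
     d_nu nu L * d_nu w L * p ^- #|L|.
Proof.
move=> nu_supp; rewrite /dLambda.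
under eq_bigr do rewrite mulr_sumr.
rewrite (exchange_big_dep (fun L : {set V} => (2 <= #|L|)%N)) /=;
  last by move=> E L _ /andP[].
rewrite [RHS]big_mkcondr /=; apply: eq_bigr => L L2; rewrite L2 /=.
rewrite -mulr_suml -/(d_nu nu L); case: ifP => LS; first by rewrite mulrA.
rewrite /d_nu big1 ?mul0r // => E LE; apply/eqP; apply: contraFT LS => nuE.
exact: (fintype.subset_trans LE (nu_supp E nuE)).
Qed.

Lemma sqr_e_nu_le_Lambda_in w nu S :
  (forall E, 0 <= nu E) ->
  (forall E, nu E != 0 -> E \subset S /\ 1 <= dLambda p w E) ->
  e_nu nu ^+ 2 <= Lambda p nu * Lambda_in p w S.
Proof.
move=> nu_ge0 nu_supp.
have e_le : e_nu nu <= \sum_E nu E * dLambda p w E.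
  apply: ler_sum => E _; have [->|nuE] := eqVneq (nu E) 0; first by rewrite mul0r.
  by rewrite -{1}(mulr1 (nu E)) ler_wpM2l // (nu_supp E nuE).2.
rewrite (sum_mul_dLambda w (fun E nuE => (nu_supp E nuE).1)) in e_le.
have p_inv_ge0 (L : {set V}) : 0 <= p ^- #|L| by rewrite invr_ge0 exprn_ge0.
have CS := weighted_CauchySchwarz
  (fun L : {set V} => (2 <= #|L|)%N && (L \subset S)) (d_nu nu) (d_nu w) p_inv_ge0.
have e_ge0 : 0 <= e_nu nu by apply: sumr_ge0.
apply: le_trans (le_trans _ CS) _.
  by rewrite ler_sqr ?nnegrE // (le_trans e_ge0 e_le).
by rewrite ler_wpM2r ?Lambda_in_ge0 ?Lambda_in_le_Lambda.
Qed.

Lemma not_janson_of_dLambda_ge1 (Gh J : hypergraph V) w S (Rb : R) :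
  0 < Rb -> (forall E, Gh E -> 1 <= dLambda p w E) -> Lambda_in p w S <= Rb ->
  (forall E, J E -> Gh E /\ E \subset S) ->
  ~ janson p Rb J.
Proof.
move=> Rb_gt0 w_ge1 wS_le JS [nu [[nu_ge0 nu_out] lt_e]].
have nu_supp E : nu E != 0 -> E \subset S /\ 1 <= dLambda p w E.
  move=> nuE; have [/JS[GE ES]|nJE] := pselect (J E); first by split; last exact: w_ge1.
  by rewrite nu_out ?eqxx in nuE.
rewrite ltr_pdivlMr // in lt_e.
have := le_trans (sqr_e_nu_le_Lambda_in nu_ge0 nu_supp)
  (ler_wpM2l (Lambda_ge0 p_ge0 nu) wS_le).
by rewrite leNgt lt_e.
Qed.

Lemma not_janson0 (Gh : hypergraph V) : ~ janson p 0 Gh.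
Proof.
by move=> [nu [_]]; rewrite invr0 mulr0 ltNge Lambda_ge0.
Qed.

End Certificate.

Section Dual.
Variables (R : realType) (V : finType) (p : R).
Implicit Types (b w nu : {set V} -> R).

Definition in_box b nu := forall E, 0 <= nu E <= b E.

Lemma exists_argmin_in_box b : (forall E, 0 <= b E) ->
  exists2 w, in_box b w & forall nu, in_box b nu ->
    Lambda p w - 2 * e_nu w <= Lambda p nu - 2 * e_nu nu.
Proof.
move=> b_ge0; pose m := #|{set V}|.
pose of_row (v : 'rV[R]_m) E := v ord0 (enum_rank E).
pose A := [set v : 'rV[R]_m | forall j, `[0, b (enum_val j)]%classic (v ord0 j)]%classic.
have A_compact : compact A.
  exact: rV_compact (fun j => @segment_compact R 0 (b (enum_val j))).
have A_neq0 : (A !=set0)%classic by exists 0 => j /=; rewrite mxE in_itv /= lexx b_ge0.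
have F_cont :
    {within A, continuous (fun v => Lambda p (of_row v) - 2 * e_nu (of_row v))}%classic.
  have row_cont E : continuous (fun v => of_row v E) by move=> v; apply: coord_continuous.
  have Lambda_cont : continuous (fun v => Lambda p (of_row v)).
    apply: continuous_sum => L; apply: continuous_mul; last exact: cst_continuous.
    have d_cont : continuous (fun v => d_nu (of_row v) L) by apply: continuous_sum.
    exact: (continuous_mul d_cont d_cont).
  have e_cont : continuous (fun v => 2 * e_nu (of_row v)).
    by apply: continuous_mul; [exact: cst_continuous | apply: continuous_sum].
  by apply: continuous_subspaceT => v; exact: (continuousB (Lambda_cont v) (e_cont v)).
have [c Ac c_min] := compact_EVT_min A_neq0 A_compact F_cont.
exists (of_row c) => [E|nu nu_box].
  by move: Ac; rewrite inE => /(_ (enum_rank E)); rewrite /= enum_rankK in_itv.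
have -> : nu = of_row (\row_j nu (enum_val j)).
  by apply: funext => E; rewrite /of_row mxE enum_rankK.
by apply: c_min; rewrite inE => j; rewrite mxE /= in_itv /= nu_box.
Qed.

Hypothesis p_ge0 : 0 <= p.

Lemma dLambda_ge1_at_argmin b w E :
  in_box b w ->
  (forall nu, in_box b nu -> Lambda p w - 2 * e_nu w <= Lambda p nu - 2 * e_nu nu) ->
  w E + 1 <= b E -> 1 <= dLambda p w E.
Proof.
move=> w_box w_min room; rewrite leNgt; apply/negP => M_lt1.
set M := dLambda p w E in M_lt1; set K := Lambda p (fun F => (F == E)%:R).
have K_ge0 : 0 <= K by apply: Lambda_ge0.
set a := 1 - M; have a_gt0 : 0 < a by rewrite subr_gt0.
(* a step [t] in (0, 1] along [E] that lowers [Lambda p - 2 * e_nu] by [t a (1 + t)] *)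
set t := a / (a + K).
have aK_gt0 : 0 < a + K by rewrite ltr_wpDr.
have t_gt0 : 0 < t by rewrite divr_gt0.
have tK : t * (a + K) = a by rewrite divfK ?gt_eqF.
have t_le1 : t <= 1 by rewrite ler_pdivrMr // mul1r lerDl.
have nu_box : in_box b (fun F => w F + t * (F == E)%:R).
  move=> F; case: (eqVneq F E) => [->|FE]; last by rewrite mulr0 addr0.
  by have /andP[w0 wb] := w_box E; rewrite mulr1; apply/andP; split; lra.
have := w_min _ nu_box; rewrite Lambda_add_indicator e_nu_add_indicator -/M -/K.
have tM : t * M = t - t * a by rewrite /a; ring.
have t2K : t ^+ 2 * K = t * a - t ^+ 2 * a.
  have tK' : t * K = a - t * a by lra.
  by rewrite expr2 -mulrA tK'; ring.
have ta_gt0 : 0 < t * a by rewrite mulr_gt0.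
have t2a_ge0 : 0 <= t ^+ 2 * a by rewrite mulr_ge0 ?sqr_ge0 ?ltW.
lra.
Qed.

Lemma not_janson_dual (Gh : hypergraph V) (Rb : R) :
  0 < Rb -> ~ janson p Rb Gh ->
  exists w, [/\ hweight Gh w, Lambda p w <= 4 * Rb &
                forall E, Gh E -> 1 <= dLambda p w E].
Proof.
move=> Rb_gt0 nj.
have e_le_Lambda nu : hweight Gh nu -> e_nu nu ^+ 2 / Rb <= Lambda p nu.
  by move=> nu_w; rewrite leNgt; apply/negP => lt; apply: nj; exists nu.
(* room [1] above [w E <= e_nu w <= 2 Rb] keeps the minimiser off the upper faces *)
pose b E : R := if `[< Gh E >] then 2 * Rb + 1 else 0.
have b_ge0 E : 0 <= b E by rewrite /b; case: ifP => // _; lra.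
have [w w_box w_min] := exists_argmin_in_box b_ge0.
have w_ge0 E : 0 <= w E by case/andP: (w_box E).
have w_hw : hweight Gh w.
  split=> // E nGE; apply/eqP; rewrite eq_le w_ge0 andbT.
  by have := w_box E; rewrite /b asboolF // => /andP[].
have Lambda_le : Lambda p w <= 2 * e_nu w.
  have /w_min : in_box b (fun=> 0) by move=> E; rewrite lexx b_ge0.
  by rewrite Lambda0 e_nu0; lra.
have e_ge0 : 0 <= e_nu w by apply: sumr_ge0.
have e_le : e_nu w <= 2 * Rb.
  have := le_trans (e_le_Lambda w w_hw) Lambda_le.
  by rewrite ler_pdivrMr // expr2 => ?; nra.
exists w; split => // [|E GE]; first lra.
apply: dLambda_ge1_at_argmin w_box w_min _; rewrite /b asboolT //.
suff : w E <= e_nu w by lra.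
by rewrite /e_nu (bigD1 E) //= lerDl sumr_ge0.
Qed.

End Dual.

Section Averaging.
Variables (R : realType) (V : finType).
Implicit Types (g : {set V} -> R) (L S : {set V}).

Lemma card_supsets_le L s : (2 <= #|L|)%N ->
  (#|[set S : {set V} | (#|S| == s) && (L \subset S)]| <= 'C(#|V| - 2, s - 2))%N.
Proof.
move=> /card_gt1P [x [y [xL yL xy]]].
set X := [set x; y]; set P := [set S : {set V} | (#|S| == s) && (L \subset S)].
have XL : X \subset L by apply/fintype.subsetP => z; rewrite !inE => /orP[]/eqP->.
have XS S : S \in P -> X \subset S.
  by rewrite inE => /andP[_ LS]; exact: (fintype.subset_trans XL LS).
have cardX : #|X| = 2 by rewrite cards2 xy.
(* removing the pair [X] maps the [s]-supersets of [L] injectively to the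
   [s-2]-subsets of [~: X] *)
have inj : {in P &, injective (fun S => S :\: X)}.
  move=> S1 S2 P1 P2 /= E.
  rewrite -(finset.setID S1 X) -(finset.setID S2 X) E.
  by rewrite (finset.setIidPr (XS _ P1)) (finset.setIidPr (XS _ P2)).
rewrite -(card_in_imset inj).
have -> : (#|V| - 2 = #|~: X|)%N by rewrite -(cardsC X) cardX addKn.
rewrite -cards_draws; apply: subset_leq_card; apply/fintype.subsetP => B.
move=> /imsetP [S PS ->]; rewrite inE; apply/andP; split.
  by apply/fintype.subsetP => z; rewrite !inE => /andP[].
have := PS; rewrite inE => /andP[/eqP <- _].
by rewrite cardsD (finset.setIidPr (XS _ PS)) cardX.
Qed.

Lemma sum_draws_sum_subsets_le g s : (forall L, 0 <= g L) ->
  \sum_(S : {set V} | #|S| == s) \sum_(L : {set V} | (2 <= #|L|)%N && (L \subset S)) g L <=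
  'C(#|V| - 2, s - 2)%:R * \sum_(L : {set V} | (2 <= #|L|)%N) g L.
Proof.
move=> g_ge0.
rewrite (exchange_big_dep (fun L : {set V} => (2 <= #|L|)%N)) /=;
  last by move=> S L _ /andP[].
rewrite mulr_sumr; apply: ler_sum => L L2.
have -> : \sum_(S : {set V} | (#|S| == s) && ((2 <= #|L|)%N && (L \subset S))) g L =
    g L *+ #|[set S : {set V} | (#|S| == s) && (L \subset S)]|.
  by rewrite -sumr_const; apply: eq_bigl => S; rewrite !inE L2.
by rewrite -[leLHS]mulr_natl ler_wpM2r // ler_nat card_supsets_le.
Qed.

End Averaging.

Lemma bin_mul_pair (n s : nat) : (2 <= s)%N -> (s <= n)%N ->
  ('C(n, s) * (s * (s - 1)) = 'C(n - 2, s - 2) * (n * (n - 1)))%N.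
Proof.
case: s => [|[|s]] // _; case: n => [|[|n]] //=.
rewrite !subn2 /= !subn1 /= => _.
have diag2 := mul_bin_diag n.+2 s.+1; have diag1 := mul_bin_diag n.+1 s.
rewrite /= in diag2 diag1.
rewrite [in LHS]mulnA [in LHS](mulnC 'C(_,_)) -diag2.
rewrite -mulnA (mulnC 'C(n.+1, s.+1)) -diag1.
by rewrite mulnA mulnC.
Qed.

Lemma exists_subset_sum_le (R : realType) (V : finType) (g : {set V} -> R) s th :
  (forall L, 0 <= g L) -> (s <= #|V|)%N -> 0 <= th ->
  (s * (s - 1))%:R <= th * (#|V| * (#|V| - 1))%:R ->
  exists2 S : {set V}, #|S| = s &
    \sum_(L : {set V} | (2 <= #|L|)%N && (L \subset S)) g L <=
    th * \sum_(L : {set V} | (2 <= #|L|)%N) g L.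
Proof.
move=> g_ge0 sn th_ge0 s_le.
set X := fun S : {set V} => \sum_(L : {set V} | (2 <= #|L|)%N && (L \subset S)) g L.
set G := \sum_(L : {set V} | (2 <= #|L|)%N) g L.
have G_ge0 : 0 <= G by apply: sumr_ge0.
have : (0 < #|[set S : {set V} | #|S| == s]|)%N by rewrite card_draws bin_gt0.
case/card_gt0P => S0; rewrite inE => S0s.
(* a set minimising [X] is at most the average of [X] over all [s]-sets *)
case: (@arg_minP _ R _ S0 (fun S => #|S| == s) X S0s) => S /eqP Ss S_min.
exists S => //.
have [s_le1|s_gt1] := leqP s 1.
  rewrite /X big1 ?mulr_ge0 // => L /andP[L2 /subset_leq_card].
  by rewrite Ss => Ls; exfalso; lia.
have avg : 'C(#|V|, s)%:R * X S <= 'C(#|V| - 2, s - 2)%:R * G.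
  apply: le_trans (sum_draws_sum_subsets_le s g_ge0).
  have -> : 'C(#|V|, s)%:R * X S = \sum_(A : {set V} | #|A| == s) X S.
    rewrite sumr_const -card_draws mulr_natl; congr (_ *+ _).
    by apply: eq_card => A; rewrite inE.
  by apply: ler_sum => A /S_min.
have := congr1 (fun m => m%:R : R) (bin_mul_pair s_gt1 sn); rewrite !natrM /=.
set c := 'C(#|V|, s)%:R in avg *; set c2 := 'C(#|V| - 2, s - 2)%:R in avg *.
rewrite !natrM in s_le; set N := (#|V|%:R * (#|V| - 1)%:R) in s_le *.
set Sz := (s%:R * (s - 1)%:R) in s_le *; move=> bin_eq.
have N_gt0 : 0 < N by rewrite /N -natrM ltr0n muln_gt0 subn_gt0; lia.
have c2_gt0 : 0 < c2 by rewrite ltr0n bin_gt0; lia.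
rewrite -(ler_pM2l (mulr_gt0 c2_gt0 N_gt0)) -{1}bin_eq.
have Sz_ge0 : 0 <= Sz by rewrite /Sz -natrM.
have -> : c * Sz * X S = Sz * (c * X S) by ring.
have -> : c2 * N * (th * G) = (th * N) * (c2 * G) by ring.
apply: le_trans (ler_wpM2l Sz_ge0 avg) _.
by rewrite ler_wpM2r // mulr_ge0 // ltW.
Qed.

Lemma exists_size_sqr_le (R : realType) (q : R) (n : nat) :
  0 <= q < 1 -> (0 < n)%N ->
  exists s : nat, [/\ q * n%:R <= s%:R, (s <= n)%N &
                      (s * (s - 1))%:R <= 4 * q ^+ 2 * (n * (n - 1))%:R].
Proof.
move=> /andP[q_ge0 q_lt1] n_gt0.
have qn_ge0 : 0 <= q * n%:R by rewrite mulr_ge0.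
have qn_lt_n : q * n%:R < n%:R by rewrite gtr_pMl // ltr0n.
set m := Num.truncn (q * n%:R).
have m_lt_n : (m < n)%N by rewrite truncn_lt_nat.
have m_le : m%:R <= q * n%:R by have /andP[] := truncn_itv qn_ge0.
exists m.+1; split => //; first exact/ltW/truncnS_gt.
rewrite subSS subn0.
have [->|m_gt0] := posnP m; first by rewrite muln0 mulr_ge0 // mulr_ge0 ?sqr_ge0.
have n_ge2 : (2 <= n)%N by lia.
rewrite !natrM natrB 1?ltnW // -addn1 natrD.
set M := m%:R in m_le *; set N := n%:R in qn_ge0 qn_lt_n m_le *.
have M1 : 1 <= M by rewrite ler1n.
have N2 : 2 <= N by rewrite ler_nat.
have MM : M * M <= q ^+ 2 * (N * N).
  have -> : q ^+ 2 * (N * N) = (q * N) * (q * N) by ring.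
  by rewrite ler_pM ?ler0n.
have NN : q ^+ 2 * (N * N) <= q ^+ 2 * (2 * (N * (N - 1))).
  by rewrite ler_wpM2l ?sqr_ge0 //; nra.
nra.
Qed.

Lemma exists_large_subset_Lambda_in_le (R : realType) (V : finType) (p q : R)
    (I : finType) (w : I -> {set V} -> R) :
  0 <= p -> 0 <= q < 1 -> (0 < #|V|)%N ->
  exists2 S : {set V}, q * #|V|%:R <= #|S|%:R &
    forall i, Lambda_in p (w i) S <= 4 * q ^+ 2 * \sum_j Lambda p (w j).
Proof.
move=> p_ge0 q01 V_gt0.
have [s [qs sV s_le]] := exists_size_sqr_le q01 V_gt0.
pose g L := \sum_j d_nu (w j) L ^+ 2 * p ^- #|L|.
have term_ge0 j (L : {set V}) : 0 <= d_nu (w j) L ^+ 2 * p ^- #|L|.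
  by rewrite mulr_ge0 ?sqr_ge0 ?invr_ge0 ?exprn_ge0.
have g_ge0 L : 0 <= g L by apply: sumr_ge0.
have [|S Ss S_sum] := exists_subset_sum_le g_ge0 sV _ s_le.
  by rewrite mulr_ge0 ?sqr_ge0.
exists S => [|i]; first by rewrite Ss.
rewrite /Lambda exchange_big /=.
apply: le_trans S_sum; apply: ler_sum => L _.
by rewrite /g (bigD1 i) //= lerDl sumr_ge0.
Qed.

Lemma delta_pow_bounds (R : realType) (r : nat) : (2 <= r)%N ->
  0 <= powR (delta R r) (2 / 3) < 1 /\
  16 * r%:R * powR (delta R r) (2 / 3) ^+ 2 <= (2 ^+ 9)^-1 * (r%:R)^-1 * delta R r.
Proof.
move=> r_ge2; set x : R := r%:R; set d := delta R r.
have x2 : 2 <= x by rewrite /x (ler_nat R 2 r).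
have d_gt0 : 0 < d by rewrite invr_gt0 exprn_gt0 //; lra.
set t := powR d 3^-1.
have t_ge0 : 0 <= t by apply: powR_ge0.
have qE : powR d (2 / 3) = t ^+ 2 by rewrite /t -powR_mulrn // -powRrM mulrC.
have t3 : t ^+ 3 = d.
  by rewrite /t -powR_mulrn // -powRrM mulVf ?powRr1 ?ltW // pnatr_eq0.
have x50 (k : nat) : (k <= 50)%N -> 2 ^+ k * x ^+ (50 - k) <= x ^+ 50.
  move=> k50; rewrite -[in leRHS](subnKC k50) exprD.
  by apply: ler_wpM2r; [rewrite exprn_ge0 | rewrite lerXn2r ?nnegrE]; lra.
have d_lt1 : d < 1.
  rewrite invf_lt1 ?exprn_gt0 //; last lra.
  by apply: lt_le_trans (x50 50%N isT); rewrite subnn expr0 mulr1 exprn_egt1 //; lra.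
have t_lt1 : t < 1.
  rewrite ltNge; apply/negP => t_ge1.
  have : 1 <= t ^+ 3 by rewrite exprn_ege1.
  lra.
rewrite qE; split; first by rewrite sqr_ge0 /= expr2; nra.
(* [2^13 x^2 t <= 1] follows from [2^39 x^6 d <= 1] by taking cube roots *)
set y := 2 ^+ 13 * x ^+ 2 * t.
have y_ge0 : 0 <= y by rewrite !mulr_ge0 ?exprn_ge0 //; lra.
have y3 : y ^+ 3 <= 1.
  have -> : y ^+ 3 = 2 ^+ 39 * x ^+ 6 * d by rewrite -t3 /y; ring.
  rewrite /d /delta -/x ler_pdivrMr ?mul1r; last by rewrite exprn_gt0 //; lra.
  apply: le_trans (x50 44%N isT); apply: ler_wpM2r; first by rewrite exprn_ge0 //; lra.
  by rewrite ler_eXn2l //; lra.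
have y_le1 : y <= 1.
  rewrite leNgt; apply/negP => y_gt1.
  have : 1 < y ^+ 3 by rewrite exprn_egt1.
  lra.
rewrite -(ler_pM2l (_ : 0 < 2 ^+ 9 * x)); last by rewrite mulr_gt0 ?exprn_gt0 //; lra.
have -> : 2 ^+ 9 * x * ((2 ^+ 9)^-1 * x^-1 * d) = t ^+ 3.
  by rewrite -t3; field; lra.
have -> : 2 ^+ 9 * x * (16 * x * (t ^+ 2) ^+ 2) = y * t ^+ 3 by rewrite /y; ring.
by rewrite ler_piMl ?exprn_ge0.
Qed.

Lemma delta_pow_sum_le (R : realType) (r : nat) (lam : 'I_r -> R) (B : R) :
  (2 <= r)%N -> 0 <= B -> (forall j, lam j <= 4 * B) ->
  4 * powR (delta R r) (2 / 3) ^+ 2 * \sum_j lam j <=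
  (2 ^+ 9)^-1 * (r%:R)^-1 * delta R r * B.
Proof.
move=> r_ge2 B_ge0 lam_le; have [_ q_small] := delta_pow_bounds R r_ge2.
have sum_le : \sum_j lam j <= r%:R * (4 * B).
  rewrite mulr_natl -[in X in _ *+ X](card_ord r) -sumr_const.
  by apply: ler_sum => j _.
apply: le_trans (ler_wpM2l _ sum_le) _; first by rewrite mulr_ge0 ?sqr_ge0.
set q := powR (delta R r) (2 / 3) in q_small *.
have -> : 4 * q ^+ 2 * (r%:R * (4 * B)) = 16 * r%:R * q ^+ 2 * B by ring.
by apply: ler_wpM2r.
Qed.

Lemma hrestr_Ihyp_colour_sub (F : sgraph) (V : finType) (r : nat) (adj : rel V)
    (c : {set V} -> 'I_r) (i : 'I_r) (S E : {set V}) :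
  hrestr (Ihyp F (colour_sub (fun x y => [&& x \in S, y \in S & adj x y]) c i) adj) S E ->
  Ihyp F (colour_sub adj c i) adj E /\ E \subset S.
Proof.
move=> [[colour_eq E_iso] ES]; split => //; split => // x y xE yE.
rewrite -(colour_eq x y xE yE) /colour_sub.
by rewrite (fintype.subsetP ES x xE) (fintype.subsetP ES y yE).
Qed.

Theorem lemma6p2 (R : realType) (k r : nat) (hr : (2 <= r)%N)
  (H : 'I_r -> sgraph) (G : sgraph) :
  inB R k r H G -> inB' R k r H G.
Proof.
move=> [c not_janson]; rewrite /inB'.
have [q_bounds _] := delta_pow_bounds R hr.
set p := pconst R k r in not_janson *; set n := vnum G in not_janson *.
have p_ge0 : 0 <= p by rewrite invr_ge0 !mulr_ge0 ?exprn_ge0.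
have d_gt0 : 0 < delta R r by rewrite invr_gt0 exprn_gt0 // ltr0n; lia.
have -> : (2 ^+ 9)^-1 * (r%:R)^-1 * delta R r * p * n%:R =
          (2 ^+ 9)^-1 * (r%:R)^-1 * delta R r * (p * n%:R) by rewrite mulrA.
(* for [p * n = 0] the Janson threshold [e^2 / 0] is [0], which no weighting beats *)
have [pn0|pn_neq0] := eqVneq (p * n%:R) 0.
  exists [set: sV G], c; split => [|i]; last by rewrite pn0 mulr0; apply: not_janson0.
  by rewrite cardsT ler_piMl ?ler0n // ltW; case/andP: q_bounds.
have pn_gt0 : 0 < p * n%:R by rewrite lt_def pn_neq0 mulr_ge0.
have n_gt0 : (0 < n)%N by rewrite lt0n; apply: contraNneq pn_neq0 => ->; rewrite mulr0.
have [w w_spec] := fin_all_exists (fun i => not_janson_dual p_ge0 pn_gt0 (not_janson i)).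
have [S qS S_sparse] := exists_large_subset_Lambda_in_le w p_ge0 q_bounds n_gt0.
exists S, c; split => // i.
have [_ _ w_ge1] := w_spec i.
apply: (not_janson_of_dLambda_ge1 p_ge0 _ w_ge1 _ (@hrestr_Ihyp_colour_sub _ _ _ _ c i S)).
  by apply: (mulr_gt0 _ pn_gt0); rewrite !mulr_gt0 ?invr_gt0 ?exprn_gt0 ?ltr0n //; lia.
apply: le_trans (S_sparse i) (delta_pow_sum_le hr (ltW pn_gt0) _).
by move=> j; case: (w_spec j).
Qed.
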